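(* Let $n\ge 2$ and let $A$ be an $n\times n$ real matrix with a real eigenpair $(\lambda,v)$ such that $v$ has no zero components, and let $D=\mathrm{diag}(v)$. Then for every $p\in\mathbb{N}\cup\{\infty\}$ and every $k\in\mathbb{N}$, $$|\det(A)|\le|\lambda|\,\big[\tau_p(D^{-1}A^kD)\big]^{\frac{n-1}{k}}.$$ In particular, $|\det(A)|\le|\lambda|\,\tau_p(D^{-1}A^{n-1}D)$.
   Context: For an $n\times n$ real matrix $M$ ($n\ge 2$) and $p\in\mathbb{N}\cup\{\infty\}$, define $$\tau_p(M)=\max\{\|M^Tx\|_p: x\in\mathbb{R}^n,\ x^Te=0,\ \|x\|_p=1\},$$ where $e$ is the all-ones vector and $\|\cdot\|_p$ is the $\ell_p$-norm. *)

From HB Require Import structures.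
From mathcomp Require Import all_boot all_order all_algebra.
From mathcomp Require Import all_classical all_reals all_analysis.
Set Implicit Arguments. Unset Strict Implicit. Unset Printing Implicit Defensive.
Import Order.TTheory GRing.Theory Num.Theory.
Local Open Scope classical_set_scope.
Local Open Scope ring_scope.

(* Index p of the l_p norm: p in N ∪ {∞}.  [PFin p] is the finite index p
   (only meaningful for p >= 1, see [valid_pidx]), [PInf] is ∞. *)
Inductive pidx := PFin of nat | PInf.

Definition valid_pidx (p : pidx) : Prop :=
  match p with PFin q => (0 < q)%N | PInf => True end.

Definition lp_norm (R : realType) (n : nat) (p : pidx) (x : 'cV[R]_n) : R :=
  match p with
  | PFin q => (\sum_(i < n) `|x i 0| `^ q%:R) `^ (q%:R^-1)
  | PInf => \big[Num.max/0]_(i < n) `|x i 0|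
  end.

(* tau_p(M) = max { ||M^T x||_p : x^T e = 0, ||x||_p = 1 }
   (written as a supremum; the set is compact, so the sup is attained) *)
Definition tau (R : realType) (n : nat) (p : pidx) (M : 'M[R]_n) : R :=
  sup [set lp_norm p (M^T *m x) | x in
        [set x : 'cV[R]_n | \sum_(i < n) x i 0 = 0 /\ lp_norm p x = 1]].

(* With D = diag v, the matrix M = D^-1 A^k D satisfies M e = lambda^k e for
   the all-ones vector e.  Hence the columns of G = M^T all sum to lambda^k, and
   G maps the hyperplane {x | sum_i x_i = 0} into itself, where by definition of
   tau_p it is tau_p(M)-Lipschitz for the l_p norm.  In a basis adapted to this
   hyperplane G is block triangular with corner lambda^k, and bounding the
   determinant of the other diagonal block through its entries gives
   |det G| <= c |lambda|^k tau_p(M)^(n-1), with c depending only on n and p.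
   Applied to the powers G^j, which satisfy the same hypotheses with lambda^(kj)
   and tau_p(M)^j, this bound loses the constant c as j grows; since
   det G = (det A)^k, we get |det A|^k <= |lambda|^k tau_p(M)^(n-1). *)

From HB Require Import structures.
From mathcomp Require Import all_boot all_order all_algebra.
From mathcomp Require Import all_classical all_reals all_analysis.
From mathcomp Require Import perm ring.
Set Implicit Arguments. Unset Strict Implicit. Unset Printing Implicit Defensive.
Import Order.TTheory GRing.Theory Num.Theory.
Local Open Scope classical_set_scope.
Local Open Scope ring_scope.

Lemma det_exprn (R : comPzRingType) n (A : 'M[R]_n) k : \det (A ^+ k) = \det A ^+ k.
Proof.
elim: k => [|k IHk]; first by rewrite !expr0 det1.
by rewrite !exprS -mulmxE det_mulmx IHk.
Qed.

Lemma eigenvector_exprn (R : comPzRingType) n (A : 'M[R]_n) lambda (v : 'cV_n) k :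
  A *m v = lambda *: v -> A ^+ k *m v = lambda ^+ k *: v.
Proof.
move=> Av; elim: k => [|k IHk]; first by rewrite !expr0 mul1mx scale1r.
by rewrite exprSr -mulmxE -mulmxA Av -scalemxAr IHk scalerA exprSr mulrC.
Qed.

Lemma det_conj_invmx (R : fieldType) n (D A : 'M[R]_n) : D \in unitmx ->
  \det (invmx D *m A *m D) = \det A.
Proof.
move=> D_unit; rewrite !det_mulmx det_inv mulrC mulrA mulfV ?mul1r //.
by rewrite -unitfE -unitmxE.
Qed.

Lemma sum_col_const (R : pzSemiRingType) n (x : 'cV[R]_n) :
  \sum_i x i 0 = ((const_mx 1 : 'rV[R]_n) *m x) 0 0.
Proof. by rewrite mxE; apply: eq_bigr => i _; rewrite mxE mul1r. Qed.

Lemma mulmx_col_entry (R : pzSemiRingType) m n k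
  (A : 'M[R]_(m, n)) (B : 'M[R]_(n, k)) i j :
  (A *m B) i j = (A *m col j B) i 0.
Proof. by rewrite !mxE; apply: eq_bigr => l _; rewrite mxE. Qed.

Lemma sum_indicatorM (R : pzSemiRingType) n (b : 'I_n) (F : 'I_n -> R) :
  \sum_l (l == b)%:R * F l = F b.
Proof.
rewrite (bigD1 b) //= eqxx mul1r big1 ?addr0 // => l /negbTE ->.
by rewrite mul0r.
Qed.

Lemma det_le_entries (R : numDomainType) m (X : 'M[R]_m) c :
  (forall i j, `|X i j| <= c) -> `|\det X| <= m`!%:R * c ^+ m.
Proof.
move=> Xc; have -> : m`!%:R * c ^+ m = \sum_(s : 'S_m) c ^+ m.
  by rewrite sumr_const card_Sn mulr_natl.
apply: le_trans (ler_norm_sum _ _ _) (ler_sum _ _) => s _.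
rewrite normrM normrX normrN1 expr1n mul1r normr_prod.
rewrite -[in c ^+ m](card_ord m) -prodr_const.
by apply: ler_prod => i _; rewrite normr_ge0 Xc.
Qed.

Lemma powR_natK (R : realType) (a : R) (q : nat) : (0 < q)%N -> 0 <= a ->
  (a `^ q%:R) `^ q%:R^-1 = a.
Proof. by move=> q0 a0; rewrite -powRrM mulfV ?powRr1 // pnatr_eq0 -lt0n. Qed.

Lemma le_of_exprn_le_scale (R : realType) (a b C : R) : 0 <= b ->
  (forall j, a ^+ j <= C * b ^+ j) -> a <= b.
Proof.
move=> b0 abC; rewrite leNgt; apply/negP => ba.
have a0 : 0 < a by exact: le_lt_trans ba.
have ratio_lt1 : `|b / a| < 1.
  by rewrite ger0_norm ?divr_ge0 ?(ltW a0) // ltr_pdivrMr // mul1r.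
have : (C * (b / a) ^+ j) @[j --> \oo] --> 0.
  by rewrite -(mulr0 C); apply: cvgMl_tmp; exact: cvg_expr.
move=> /cvgr_lt /(_ _ ltr01) [N _ /(_ N (leqnn N))].
by rewrite expr_div_n mulrA ltr_pdivrMr ?exprn_gt0 // mul1r ltNge abC.
Qed.

Lemma le_mul_powR_of_exprn (R : realType) (a b t : R) k m : (0 < k)%N ->
  0 <= b -> 0 <= t -> a ^+ k <= b ^+ k * t ^+ m -> a <= b * t `^ (m%:R / k%:R).
Proof.
move=> k_gt0 b0 t0 abt; have [a_le0|a_gt0] := leP a 0.
  by rewrite (le_trans a_le0) ?mulr_ge0 ?powR_ge0.
have root_k : (t `^ (m%:R / k%:R)) ^+ k = t ^+ m.
  by rewrite -powR_mulrn ?powR_ge0 // -powRrM mulfVK ?powR_mulrn // pnatr_eq0 -lt0n.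
by rewrite -(ler_pXn2r k_gt0) ?nnegrE ?mulr_ge0 ?powR_ge0 ?(ltW a_gt0) // exprMn root_k.
Qed.

Section LpNorm.
Variables (R : realType) (n : nat) (p : pidx).
Implicit Types x y : 'cV[R]_n.

Lemma lp_norm_ge0 x : 0 <= lp_norm p x.
Proof. by case: p => [q|] /=; [exact: powR_ge0 | exact: bigmax_ge_id]. Qed.

Lemma lp_norm_le x y : (forall i, `|x i 0| <= `|y i 0|) -> lp_norm p x <= lp_norm p y.
Proof.
move=> xy; case: p => [q|] /=.
  apply: ge0_ler_powR; rewrite ?invr_ge0 ?ler0n ?nnegrE ?sumr_ge0 //;
    try by move=> i _; exact: powR_ge0.
  by apply: ler_sum => i _; apply: ge0_ler_powR; rewrite ?ler0n ?nnegrE.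
exact: le_bigmax2.
Qed.

Hypothesis p_valid : valid_pidx p.

Lemma ler_coord_lp_norm x i : `|x i 0| <= lp_norm p x.
Proof.
move: p_valid; case: p => [q|] /= q0; last exact: (le_bigmax 0 (fun i => `|x i 0|) i).
rewrite -{1}(powR_natK q0 (normr_ge0 (x i 0))).
apply: ge0_ler_powR; rewrite ?invr_ge0 ?ler0n ?nnegrE ?powR_ge0 ?sumr_ge0 //;
  try by move=> j _; exact: powR_ge0.
by rewrite (bigD1 i) //= lerDl sumr_ge0 // => j _; exact: powR_ge0.
Qed.

Lemma lp_normZ a x : lp_norm p (a *: x) = `|a| * lp_norm p x.
Proof.
move: p_valid; case: p => [q|] /= q0.
  under eq_bigr => i _ do rewrite mxE normrM powRM //.
  by rewrite -mulr_sumr powRM ?powR_ge0 ?sumr_ge0 ?(powR_natK q0).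
elim/big_rec2: _ => [|i y1 y2 _ ->]; first by rewrite mulr0.
by rewrite mxE normrM maxr_pMr.
Qed.

Lemma lp_norm_gt0 x : x != 0 -> 0 < lp_norm p x.
Proof.
move=> x0; have [i xi0] : exists i, x i 0 != 0.
  apply/existsP; apply: contraNT x0; rewrite negb_exists => /forallP x_eq0.
  by apply/eqP/matrixP => i j; rewrite ord1 mxE; apply/eqP/negbNE/x_eq0.
by apply: lt_le_trans (ler_coord_lp_norm x i); rewrite normr_gt0.
Qed.

Lemma lp_norm_le_const x (c : R) : 0 <= c -> (forall i, `|x i 0| <= c) ->
  lp_norm p x <= c * lp_norm p (const_mx 1 : 'cV[R]_n).
Proof.
move=> c0 xc; rewrite -[c]ger0_norm // -lp_normZ; apply: lp_norm_le => i.
by rewrite !mxE mulr1 ?normr_id (ger0_norm c0).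
Qed.

End LpNorm.

Section ConstColumnSums.
Variables (R : comPzRingType) (m : nat).
Local Notation ones := (const_mx 1 : 'rV[R]_m.+1).

(* [sumlast_mx] adds all rows into the last one.  Conjugating by it makes a
   matrix whose columns all sum to [mu] block triangular with corner [mu]; the
   columns e_b - e_last (b <> last) of its inverse have zero sum. *)
Definition sumlast_mx : 'M[R]_m.+1 :=
  \matrix_(i, l) (if i == ord_max then 1 else (i == l)%:R).

Definition sumlast_inv_mx : 'M[R]_m.+1 :=
  \matrix_(i, b) (if b == ord_max then (i == ord_max)%:R
                  else (i == b)%:R - (i == ord_max)%:R).

Lemma lift_max_eqF (a : 'I_m) : (lift ord_max a == ord_max :> 'I_m.+1) = false.
Proof. by rewrite eq_sym (negbTE (neq_lift _ _)). Qed.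

Lemma sumlast_mx_max (X : 'M[R]_m.+1) b :
  (sumlast_mx *m X) ord_max b = (ones *m X) 0 b.
Proof. by rewrite !mxE; apply: eq_bigr => l _; rewrite !mxE eqxx. Qed.

Lemma sumlast_mx_lift (X : 'M[R]_m.+1) a b :
  (sumlast_mx *m X) (lift ord_max a) b = X (lift ord_max a) b.
Proof.
rewrite mxE -[RHS](sum_indicatorM _ (X^~ b)); apply: eq_bigr => l _.
by rewrite mxE lift_max_eqF eq_sym.
Qed.

Lemma ones_mul_sumlast_inv : ones *m sumlast_inv_mx = delta_mx 0 ord_max.
Proof.
apply/matrixP => i b; rewrite ord1 !mxE eqxx /=.
under eq_bigr => l _ do rewrite !mxE mul1r.
have sum_indicator (c : 'I_m.+1) : \sum_l (l == c)%:R = 1 :> R.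
  by rewrite (bigD1 c) //= eqxx big1 ?addr0 // => l /negbTE ->.
case: eqP => _; first exact: sum_indicator.
by rewrite sumrB !sum_indicator subrr.
Qed.

Lemma sumlast_mulmx_inv : sumlast_mx *m sumlast_inv_mx = 1.
Proof.
apply/matrixP => i b; case: (unliftP ord_max i) => [a ->|->].
  by rewrite sumlast_mx_lift !mxE; case: eqP => [->|_]; rewrite ?lift_max_eqF ?subr0.
by rewrite sumlast_mx_max ones_mul_sumlast_inv !mxE eqxx eq_sym.
Qed.

Lemma sum_col_sumlast_inv_lift b :
  \sum_i (col (lift ord_max b) sumlast_inv_mx) i 0 = 0.
Proof.
rewrite sum_col_const -mulmx_col_entry ones_mul_sumlast_inv mxE.
by rewrite lift_max_eqF andbF.
Qed.

Lemma colsum_exprn (G : 'M[R]_m.+1) mu j : ones *m G = mu *: ones ->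
  ones *m G ^+ j = mu ^+ j *: ones.
Proof.
move=> colsum; elim: j => [|j IHj]; first by rewrite expr0 mulmx1 scale1r.
by rewrite exprSr -mulmxE mulmxA IHj -scalemxAl colsum scalerA -exprSr.
Qed.

Lemma sum_mulmx_colsum (G : 'M[R]_m.+1) mu (x : 'cV[R]_m.+1) : ones *m G = mu *: ones ->
  \sum_i (G *m x) i 0 = mu * \sum_i x i 0.
Proof. by move=> colsum; rewrite !sum_col_const mulmxA colsum -scalemxAl mxE. Qed.

Lemma det_const_colsum (G : 'M[R]_m.+1) mu : ones *m G = mu *: ones ->
  \det G = mu * \det (\matrix_(a, b)
                        (G *m sumlast_inv_mx) (lift ord_max a) (lift ord_max b)).
Proof.
move=> colsum.
have -> : \det G = \det (sumlast_mx *m (G *m sumlast_inv_mx)).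
  by rewrite !det_mulmx mulrCA -det_mulmx sumlast_mulmx_inv det1 mulr1.
rewrite (expand_det_row _ ord_max) (bigD1 ord_max) //= big1 ?addr0 => [|b /negbTE bmax].
  rewrite sumlast_mx_max mulmxA colsum -scalemxAl ones_mul_sumlast_inv !mxE !eqxx mulr1.
  rewrite /cofactor addnn -signr_odd odd_double expr0 mul1r; congr (_ * \det _).
  by apply/matrixP => a b; rewrite [RHS]mxE -sumlast_mx_lift !mxE.
rewrite sumlast_mx_max mulmxA colsum -scalemxAl ones_mul_sumlast_inv !mxE.
by rewrite bmax andbF mulr0 mul0r.
Qed.

End ConstColumnSums.

Section DetContraction.
Variables (R : realType) (m : nat) (p : pidx) (G : 'M[R]_m.+1) (mu t : R).
Local Notation ones := (const_mx 1 : 'rV[R]_m.+1).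
Hypotheses (p_valid : valid_pidx p) (colsum : ones *m G = mu *: ones) (t_ge0 : 0 <= t).
Hypothesis contract :
  forall x : 'cV_m.+1, \sum_i x i 0 = 0 -> lp_norm p (G *m x) <= t * lp_norm p x.

Lemma contraction_exprn j (x : 'cV_m.+1) : \sum_i x i 0 = 0 ->
  lp_norm p (G ^+ j *m x) <= t ^+ j * lp_norm p x.
Proof.
move=> x0; elim: j => [|j IHj]; first by rewrite expr0 mul1mx mul1r.
have Gjx0 : \sum_i (G ^+ j *m x) i 0 = 0.
  by rewrite (sum_mulmx_colsum _ (colsum_exprn j colsum)) x0 mulr0.
rewrite exprS -mulmxE -mulmxA; apply: le_trans (contract Gjx0) _.
by rewrite exprS -mulrA ler_wpM2l.
Qed.

Lemma det_le_colsum_contraction : `|\det G| <= `|mu| * t ^+ m.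
Proof.
pose P := sumlast_inv_mx R m.
pose K := \sum_b lp_norm p (col b P).
have K0 : 0 <= K by rewrite sumr_ge0 // => b _; exact: lp_norm_ge0.
apply: (@le_of_exprn_le_scale _ _ _ (m`!%:R * K ^+ m)).
  by rewrite mulr_ge0 ?exprn_ge0.
move=> j; rewrite -normrX -det_exprn (det_const_colsum (colsum_exprn j colsum)).
have entry a b : `|(G ^+ j *m P) (lift ord_max a) (lift ord_max b)| <= t ^+ j * K.
  rewrite mulmx_col_entry; apply: le_trans (ler_coord_lp_norm p_valid _ _) _.
  apply: le_trans (contraction_exprn _ (sum_col_sumlast_inv_lift _ _)) _.
  rewrite ler_wpM2l ?exprn_ge0 // /K (bigD1 (lift ord_max b)) //= lerDl.
  by rewrite sumr_ge0 // => c _; exact: lp_norm_ge0.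
have -> : m`!%:R * K ^+ m * (`|mu| * t ^+ m) ^+ j
          = `|mu| ^+ j * (m`!%:R * (t ^+ j * K) ^+ m).
  by rewrite !exprMn -!exprM mulnC; ring.
rewrite normrM normrX ler_wpM2l ?exprn_ge0 // det_le_entries // => a b.
by rewrite mxE; exact: entry.
Qed.

End DetContraction.

Section Tau.
Variables (R : realType) (n : nat) (p : pidx) (M : 'M[R]_n).
Hypothesis p_valid : valid_pidx p.

Let tau_set := [set lp_norm p (M^T *m x) | x in
  [set x : 'cV[R]_n | \sum_(i < n) x i 0 = 0 /\ lp_norm p x = 1]].

Let tau_set_ubound : has_ubound tau_set.
Proof.
pose c := \sum_i \sum_j `|M j i|.
exists (c * lp_norm p (const_mx 1 : 'cV[R]_n)) => _ [x [_ x1] <-].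
apply: lp_norm_le_const => // [|i].
  by rewrite /c sumr_ge0 // => i _; rewrite sumr_ge0.
rewrite mxE; apply: le_trans (ler_norm_sum _ _ _) _.
apply: (@le_trans _ _ (\sum_j `|M j i|)).
  apply: ler_sum => j _; rewrite mxE normrM ler_piMr //.
  by rewrite -x1; exact: ler_coord_lp_norm.
by rewrite /c [leRHS](bigD1 i) //= lerDl sumr_ge0 // => l _; rewrite sumr_ge0.
Qed.

Lemma lp_norm_trmx_mul_le_tau (x : 'cV[R]_n) : \sum_i x i 0 = 0 ->
  lp_norm p (M^T *m x) <= tau p M * lp_norm p x.
Proof.
move=> x0; have [->|xN0] := eqVneq x 0.
  by rewrite mulmx0 -(scale0r 0) !(lp_normZ p_valid) normr0 !mul0r mulr0.
have x_gt0 := lp_norm_gt0 p_valid xN0.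
pose y := (lp_norm p x)^-1 *: x.
have y_in : tau_set (lp_norm p (M^T *m y)).
  exists y => //; split.
    by rewrite sum_col_const -scalemxAr mxE -sum_col_const x0 mulr0.
  by rewrite lp_normZ // ger0_norm ?invr_ge0 ?(ltW x_gt0) // mulVf ?gt_eqF.
have := sup_upper_bound (conj (ex_intro _ _ y_in) tau_set_ubound) y_in.
rewrite -scalemxAr lp_normZ // ger0_norm ?invr_ge0 ?(ltW x_gt0) //.
by rewrite ler_pdivrMl // mulrC.
Qed.

Lemma tau_ge0 : (1 < n)%N -> 0 <= tau p M.
Proof.
move=> n_gt1; pose i0 := Ordinal (ltnW n_gt1); pose i1 := Ordinal n_gt1.
pose w : 'cV[R]_n := delta_mx i0 0 - delta_mx i1 0.
have w0 : \sum_i w i 0 = 0.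
  by rewrite sum_col_const mulmxBr -!colE !col_const subrr mxE.
have wN0 : w != 0.
  by apply/eqP => /matrixP /(_ i0 0) /eqP; rewrite !mxE eqxx /= subr0 oner_eq0.
rewrite -(pmulr_lge0 _ (lp_norm_gt0 p_valid wN0)).
exact: le_trans (lp_norm_ge0 _ _) (lp_norm_trmx_mul_le_tau w0).
Qed.

End Tau.

Section DiagConj.
Variables (R : fieldType) (n : nat) (v : 'cV[R]_n).
Hypothesis v_neq0 : forall i, v i 0 != 0.
Local Notation D := (diag_mx v^T).

Lemma diag_unitmx : D \in unitmx.
Proof. by rewrite unitmxE unitfE det_diag; apply/prodf_neq0 => i _; rewrite mxE. Qed.

Lemma colsum_diag_conj (B : 'M[R]_n) mu : B *m v = mu *: v ->
  const_mx 1 *m (invmx D *m B *m D)^T = mu *: (const_mx 1 : 'rV_n).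
Proof.
have D_ones : D *m const_mx 1 = v.
  by apply/matrixP => i j; rewrite mul_diag_mx !mxE mulr1 ord1.
have invD_v : invmx D *m v = const_mx 1.
  by rewrite -[X in _ *m X]D_ones mulKmx ?diag_unitmx.
move=> Bv; rewrite -[const_mx 1]trmx_const -trmx_mul -!mulmxA D_ones Bv.
by rewrite -scalemxAr invD_v linearZ /= trmx_const.
Qed.

End DiagConj.

Theorem corollary4 (R : realType) (n : nat) (hn : (2 <= n)%N)
  (A : 'M[R]_n) (lambda : R) (v : 'cV[R]_n)
  (hAv : A *m v = lambda *: v) (hv : forall i, v i 0 != 0) :
  let D := diag_mx v^T in
  (forall (p : pidx) (k : nat), valid_pidx p -> (0 < k)%N ->
     `|\det A| <= `|lambda| *
        tau p (invmx D *m (A ^+ k) *m D) `^ ((n - 1)%:R / k%:R))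
  /\
  (forall p : pidx, valid_pidx p ->
     `|\det A| <= `|lambda| * tau p (invmx D *m (A ^+ (n - 1)) *m D)).
Proof.
case: n hn A v hAv hv => [|[|m]] // _ A v hAv hv D; rewrite subn1 /=.
pose M k := invmx D *m A ^+ k *m D.
have key p k : valid_pidx p ->
    `|\det A| ^+ k <= `|lambda| ^+ k * tau p (M k) ^+ m.+1.
  move=> p_valid; rewrite -!normrX -det_exprn.
  rewrite -(det_conj_invmx _ (diag_unitmx hv)) -det_tr.
  apply: (det_le_colsum_contraction p_valid).
  - by rewrite (colsum_diag_conj hv (eigenvector_exprn k hAv)).
  - exact: tau_ge0 p_valid _.
  - exact: lp_norm_trmx_mul_le_tau.
split=> [p k p_valid k_gt0 | p p_valid].
  by apply: le_mul_powR_of_exprn; rewrite ?tau_ge0 ?key.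
rewrite -(ler_pXn2r (ltn0Sn m)) ?nnegrE ?mulr_ge0 ?tau_ge0 // exprMn.
exact: key.
Qed.
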